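(* Let $\ell\ge1$, $0<\delta\le1/2$, $\alpha\in\mathbb T$, $R=\{n\in\mathbb N:\|n^\ell\alpha\|>\delta\}$, and $m=\lceil 2^{\ell-1}\delta^{-1}\rceil$. Then $R$ is not $m$-large.
   Context: $\|t\|$ is the distance to the nearest integer. For $m\ge2$, $R\subset\mathbb N$ is $m$-large if every coloring of $\mathbb N$ with $m$ colors contains arbitrarily long monochromatic arithmetic progressions with common difference in $R$. *)

From Stdlib Require Import Reals ZArith Arith Lia.
Open Scope R_scope.

(* Distance to the nearest integer: ||t|| = min(frac t, 1 - frac t),
   where Int_part t is the floor of t. *)
Definition dist_nearest (t : R) : R :=
  Rmin (t - IZR (Int_part t)) (1 - (t - IZR (Int_part t))).

Definition Rceil (x : R) : Z := (- Int_part (- x))%Z.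

(* Positive integers are ℕ = {1,2,...}. *)
Definition m_large (m : nat) (RS : nat -> Prop) : Prop :=
  forall c : nat -> nat, (forall n, (c n < m)%nat) ->
  forall k : nat, exists a d : nat,
    (1 <= a)%nat /\ RS d /\
    forall i : nat, (i < k)%nat -> c (a + i * d)%nat = c a.

(* Colour n by the position of {n^l alpha / l!} among m equal subintervals of [0, 1).
   On a monochromatic progression a, a + d, ..., a + l d the fractional parts differ
   pairwise by less than 1/m, so their l-th finite difference with step d is smaller
   than 2^(l-1)/m <= delta in absolute value.  The same difference of n^l alpha / l!
   is exactly d^l alpha, and that of the integer parts is an integer; hence
   ||d^l alpha|| < delta and d lies outside R. *)

From Stdlib Require Import Reals ZArith Arith Lia Lra.
Open Scope R_scope.

Definition fdiff (d : R) (h : R -> R) : R -> R := fun x => h (x + d) - h x.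

Fixpoint fdiffn (d : R) (j : nat) (h : R -> R) : R -> R :=
  match j with O => h | S j => fdiffn d j (fdiff d h) end.

Lemma fdiffn_ext d j : forall h h', (forall x, h x = h' x) ->
  forall x, fdiffn d j h x = fdiffn d j h' x.
Proof.
  induction j as [|j IH]; intros h h' E x; simpl; [apply E|].
  apply IH; intro y; unfold fdiff; rewrite !E; reflexivity.
Qed.

Lemma fdiffn_minus d j : forall f g x,
  fdiffn d j (fun y => f y - g y) x = fdiffn d j f x - fdiffn d j g x.
Proof.
  induction j as [|j IH]; intros f g x; simpl; [reflexivity|].
  rewrite <- IH; apply fdiffn_ext; intro y; unfold fdiff; ring.
Qed.

Lemma fdiffn_integer d j : forall g, (forall x, exists z, g x = IZR z) ->
  forall x, exists z, fdiffn d j g x = IZR z.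
Proof.
  induction j as [|j IH]; intros g Hg x; simpl; [apply Hg|].
  apply IH; intro y; unfold fdiff.
  destruct (Hg (y + d)) as [z1 ->], (Hg y) as [z2 ->].
  exists (z1 - z2)%Z; rewrite minus_IZR; reflexivity.
Qed.

Lemma fdiffn_abs_lt d j : forall h A x,
  (forall i, (i <= j)%nat -> Rabs (h (x + INR i * d)) < A) ->
  Rabs (fdiffn d j h x) < 2 ^ j * A.
Proof.
  induction j as [|j IH]; intros h A x H; simpl.
  - specialize (H 0%nat (le_n 0)); simpl in H.
    replace (x + 0 * d) with x in H by ring; lra.
  - replace (2 * 2 ^ j * A) with (2 ^ j * (2 * A)) by ring.
    apply IH; intros i Hi; unfold fdiff.
    pose proof (H (S i) ltac:(lia)) as H1; pose proof (H i ltac:(lia)) as H0.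
    rewrite S_INR in H1.
    replace (x + (INR i + 1) * d) with (x + INR i * d + d) in H1 by ring.
    eapply Rle_lt_trans; [apply Rabs_triang|]; rewrite Rabs_Ropp; lra.
Qed.

Fixpoint poly_le (n : nat) (f : R -> R) : Prop :=
  match n with
  | O => exists c, forall x, f x = c
  | S n => exists c g, poly_le n g /\ forall x, f x = c * x ^ S n + g x
  end.

Lemma poly_le_ext n f f' : poly_le n f -> (forall x, f x = f' x) -> poly_le n f'.
Proof.
  destruct n as [|n]; simpl.
  - intros [c Hc] E; exists c; intro x; rewrite <- E; auto.
  - intros [c [g [Hg Hf]]] E; exists c, g; split; auto.
    intro x; rewrite <- E; auto.
Qed.

Lemma poly_le_S n f : poly_le n f -> poly_le (S n) f.
Proof. intro H; exists 0, f; split; auto; intro; ring. Qed.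

Lemma poly_le_const n c : poly_le n (fun _ => c).
Proof.
  induction n as [|n IH]; [exists c; auto|].
  apply poly_le_S, IH.
Qed.

Lemma poly_le_lincomb n a : forall f g, poly_le n f -> poly_le n g ->
  poly_le n (fun x => a * f x + g x).
Proof.
  induction n as [|n IH]; simpl; intros f g Hf Hg.
  - destruct Hf as [b Hb], Hg as [c Hc].
    exists (a * b + c); intro x; rewrite Hb, Hc; reflexivity.
  - destruct Hf as [b [f' [Hf' Ef]]], Hg as [c [g' [Hg' Eg]]].
    exists (a * b + c), (fun x => a * f' x + g' x); split; [auto|].
    intro x; rewrite Ef, Eg; ring.
Qed.

Lemma poly_le_sum_coeff (a : nat -> R) n :
  poly_le n (fun x => sum_f_R0 (fun i => a i * x ^ i) n).
Proof.
  induction n as [|n IH]; simpl.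
  - exists (a 0%nat); intro; ring.
  - exists (a (S n)), (fun x => sum_f_R0 (fun i => a i * x ^ i) n); split; auto.
    intro x; simpl; ring.
Qed.

Lemma poly_le_binomial_sum n k d :
  poly_le n (fun x => sum_f_R0 (fun i => C k i * x ^ i * d ^ (k - i)) n).
Proof.
  apply (poly_le_ext _ _ _ (poly_le_sum_coeff (fun i => C k i * d ^ (k - i)) n)).
  intro x; apply sum_eq; intros i _; ring.
Qed.

Lemma C_n_n n : C n n = 1.
Proof.
  unfold C; rewrite Nat.sub_diag; simpl fact; simpl INR.
  field; apply INR_fact_neq_0.
Qed.

Lemma C_Sn_n n : C (S n) n = INR (S n).
Proof.
  unfold C; replace (S n - n)%nat with 1%nat by lia.
  change (fact (S n)) with (S n * fact n)%nat; rewrite mult_INR; simpl fact; simpl INR.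
  field; apply INR_fact_neq_0.
Qed.

Lemma pow_S_sub_binomial n d x : (x + d) ^ S n - x ^ S n =
  sum_f_R0 (fun i => C (S n) i * x ^ i * d ^ (S n - i)) n.
Proof. rewrite binomial, tech5, C_n_n, Nat.sub_diag; simpl (d ^ 0); ring. Qed.

Lemma poly_le_pow_S_sub n d : poly_le n (fun x => (x + d) ^ S n - x ^ S n).
Proof.
  apply (poly_le_ext _ _ _ (poly_le_binomial_sum n (S n) d)).
  intro x; symmetry; apply pow_S_sub_binomial.
Qed.

Lemma pow_S_sub_lead n d : exists g, poly_le n g /\ forall x,
  (x + d) ^ S (S n) - x ^ S (S n) = INR (S (S n)) * d * x ^ S n + g x.
Proof.
  exists (fun x => sum_f_R0 (fun i => C (S (S n)) i * x ^ i * d ^ (S (S n) - i)) n).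
  split; [apply poly_le_binomial_sum|].
  intro x; rewrite pow_S_sub_binomial, tech5, C_Sn_n.
  replace (S (S n) - S n)%nat with 1%nat by lia; ring.
Qed.

Lemma poly_le_fdiff d k : forall g, poly_le (S k) g -> poly_le k (fdiff d g).
Proof.
  induction k as [|k IH]; intros g [c [g' [Hg' Eg]]]; unfold fdiff.
  - destruct Hg' as [b Hb].
    exists (c * d); intro x; rewrite !Eg, !Hb; ring.
  - apply (poly_le_ext _ (fun x => c * ((x + d) ^ S (S k) - x ^ S (S k)) + fdiff d g' x)).
    + apply poly_le_lincomb; [apply poly_le_pow_S_sub|apply poly_le_S, IH, Hg'].
    + intro x; unfold fdiff; rewrite !Eg; ring.
Qed.

Lemma fdiffn_lead d n : forall c g, poly_le n g -> forall x,
  fdiffn d (S n) (fun y => c * y ^ S n + g y) x = c * INR (fact (S n)) * d ^ S n.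
Proof.
  induction n as [|n IH]; intros c g Hg x.
  - destruct Hg as [b Hb]; simpl; unfold fdiff; rewrite !Hb; ring.
  - destruct (pow_S_sub_lead n d) as [g0 [Hg0 E0]].
    change (fdiffn d (S (S n)) ?f x) with (fdiffn d (S n) (fdiff d f) x).
    rewrite (fdiffn_ext d (S n) _
      (fun y => c * INR (S (S n)) * d * y ^ S n + (c * g0 y + fdiff d g y))).
    + rewrite IH by (apply poly_le_lincomb; [exact Hg0|apply poly_le_fdiff, Hg]).
      change (fact (S (S n))) with (S (S n) * fact (S n))%nat.
      rewrite mult_INR; simpl; ring.
    + intro y; unfold fdiff.
      replace (c * (y + d) ^ S (S n) + g (y + d) - (c * y ^ S (S n) + g y))
        with (c * ((y + d) ^ S (S n) - y ^ S (S n)) + (g (y + d) - g y)) by ring.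
      rewrite E0; ring.
Qed.

Lemma fdiffn_frac_monomial n c d x : exists z,
  fdiffn d (S n) (fun y => frac_part (c * y ^ S n)) x = c * INR (fact (S n)) * d ^ S n - IZR z.
Proof.
  destruct (fdiffn_integer d (S n) (fun y => IZR (Int_part (c * y ^ S n))))
    with (x := x) as [z Hz]; [intro y; eexists; reflexivity|].
  exists z; unfold frac_part; rewrite fdiffn_minus, Hz.
  rewrite (fdiffn_ext d (S n) _ (fun y => c * y ^ S n + 0)) by (intro; ring).
  rewrite fdiffn_lead by apply poly_le_const; reflexivity.
Qed.

Lemma dist_nearest_int_add_le z e : Rabs e < 1 -> dist_nearest (IZR z + e) <= Rabs e.
Proof.
  intro He; unfold dist_nearest.
  destruct (Rle_lt_dec 0 e) as [Hpos|Hneg].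
  - rewrite Rabs_right in He |- * by lra.
    destruct (Int_part_frac_part_spec (IZR z + e) z e) as [<- _]; [lra|reflexivity|].
    eapply Rle_trans; [apply Rmin_l|lra].
  - rewrite Rabs_left in He |- * by lra.
    destruct (Int_part_frac_part_spec (IZR z + e) (z - 1) (1 + e)) as [<- _];
      [lra|rewrite minus_IZR; simpl; ring|].
    rewrite minus_IZR; simpl; eapply Rle_trans; [apply Rmin_r|lra].
Qed.

Lemma Rceil_to_nat_ge x : 0 <= x -> x <= INR (Z.to_nat (Rceil x)).
Proof.
  assert (Hx : x <= IZR (Rceil x)).
  { unfold Rceil; rewrite opp_IZR; destruct (base_Int_part (- x)); lra. }
  intro Hx0; rewrite INR_IZR_INZ, Z2Nat.id; [exact Hx|].
  apply le_IZR; lra.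
Qed.

Lemma Int_part_nonneg r : 0 <= r -> (0 <= Int_part r)%Z.
Proof.
  intro Hr; destruct (base_Int_part r) as [_ Hgt].
  assert (Hlt : IZR (-1) < IZR (Int_part r)) by (simpl; lra).
  apply lt_IZR in Hlt; lia.
Qed.

Definition bucket (m : nat) (t : R) : nat := Z.to_nat (Int_part (INR m * t)).

Lemma bucket_lt m t : (0 < m)%nat -> 0 <= t < 1 -> (bucket m t < m)%nat.
Proof.
  intros Hm Ht; apply lt_0_INR in Hm; unfold bucket.
  pose proof (Int_part_nonneg (INR m * t) ltac:(nra)) as Hge.
  destruct (base_Int_part (INR m * t)) as [Hle _].
  assert (Hlt : IZR (Int_part (INR m * t)) < IZR (Z.of_nat m)) by (rewrite <- INR_IZR_INZ; nra).
  apply lt_IZR in Hlt; lia.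
Qed.

Lemma bucket_close m s t : (0 < m)%nat -> 0 <= s < 1 -> 0 <= t < 1 ->
  bucket m s = bucket m t -> Rabs (t - s) < / INR m.
Proof.
  intros Hm Hs Ht E; apply lt_0_INR in Hm; unfold bucket in E.
  pose proof (Int_part_nonneg (INR m * s) ltac:(nra)) as Hs0.
  pose proof (Int_part_nonneg (INR m * t) ltac:(nra)) as Ht0.
  assert (Ek : Int_part (INR m * s) = Int_part (INR m * t)) by lia.
  destruct (base_Int_part (INR m * s)) as [S1 S2], (base_Int_part (INR m * t)) as [T1 T2].
  rewrite Ek in S1, S2.
  replace (t - s) with ((INR m * t - INR m * s) * / INR m) by (field; lra).
  rewrite Rabs_mult, (Rabs_right (/ INR m)) by (apply Rle_ge, Rlt_le, Rinv_0_lt_compat, Hm).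
  rewrite <- (Rmult_1_l (/ INR m)) at 2.
  apply Rmult_lt_compat_r; [apply Rinv_0_lt_compat, Hm|apply Rabs_def1; lra].
Qed.

Lemma fdiffn_abs_lt_of_bucket_const m d j h x : (0 < m)%nat ->
  (forall y, 0 <= h y < 1) ->
  (forall i, (i <= S j)%nat -> bucket m (h (x + INR i * d)) = bucket m (h x)) ->
  Rabs (fdiffn d (S j) h x) < 2 ^ j * / INR m.
Proof.
  intros Hm Hh Hconst; change (fdiffn d (S j) h) with (fdiffn d j (fdiff d h)).
  apply fdiffn_abs_lt; intros i Hi; unfold fdiff.
  replace (x + INR i * d + d) with (x + INR (S i) * d) by (rewrite S_INR; ring).
  apply bucket_close; [exact Hm|apply Hh|apply Hh|].
  rewrite !Hconst by lia; reflexivity.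
Qed.

Lemma Rceil_div_to_nat_spec p delta : 0 < p -> 0 < delta ->
  (0 < Z.to_nat (Rceil (p / delta)))%nat /\ p * / INR (Z.to_nat (Rceil (p / delta))) <= delta.
Proof.
  intros Hp Hd; set (m := Z.to_nat (Rceil (p / delta))).
  assert (Hpd : 0 < p / delta) by (apply Rdiv_lt_0_compat; lra).
  assert (Hm : p / delta <= INR m) by (apply Rceil_to_nat_ge; lra).
  assert (Hm0 : 0 < INR m) by lra.
  split; [apply INR_lt; simpl; exact Hm0|].
  apply (Rmult_le_reg_r (INR m)); [exact Hm0|].
  rewrite Rmult_assoc, Rinv_l by lra.
  apply (Rmult_le_reg_r (/ delta)); [apply Rinv_0_lt_compat; lra|].
  replace (delta * INR m * / delta) with (INR m) by (field; lra); rewrite Rmult_1_r; exact Hm.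
Qed.

Theorem mainTheorem19 (l : nat) (delta alpha : R)
  (hl : (1 <= l)%nat) (hd0 : 0 < delta) (hd1 : delta <= 1 / 2) :
  ~ m_large (Z.to_nat (Rceil (2 ^ (l - 1) / delta)))
      (fun n : nat => (1 <= n)%nat /\ dist_nearest (INR n ^ l * alpha) > delta).
Proof.
  destruct l as [|j]; [lia|]; replace (S j - 1)%nat with j by lia.
  destruct (Rceil_div_to_nat_spec (2 ^ j) delta) as [Hm0 Hw]; [apply pow_lt; lra|exact hd0|].
  set (m := Z.to_nat (Rceil (2 ^ j / delta))) in *.
  set (beta := alpha / INR (fact (S j))).
  set (h := fun y => frac_part (beta * y ^ S j)).
  assert (Hh : forall y, 0 <= h y < 1) by (intro y; destruct (base_fp (beta * y ^ S j)); unfold h; lra).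
  intros Hlarge.
  destruct (Hlarge (fun n => bucket m (h (INR n)))) with (k := S (S j))
    as [a [d [_ [[_ Hfar] Hmono]]]]; [intro n; apply bucket_lt; [exact Hm0|apply Hh]|].
  assert (Hsmall : Rabs (fdiffn (INR d) (S j) h (INR a)) < 2 ^ j * / INR m).
  { apply fdiffn_abs_lt_of_bucket_const; [exact Hm0|exact Hh|].
    intros i Hi; rewrite <- (Hmono i) by lia; rewrite plus_INR, mult_INR; reflexivity. }
  destruct (fdiffn_frac_monomial j beta (INR d) (INR a)) as [z Hz]; fold h in Hz.
  assert (Halpha : INR d ^ S j * alpha = IZR z + fdiffn (INR d) (S j) h (INR a)).
  { rewrite Hz; unfold beta; field; apply INR_fact_neq_0. }
  pose proof (dist_nearest_int_add_le z (fdiffn (INR d) (S j) h (INR a)) ltac:(lra)) as Hnear.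
  rewrite <- Halpha in Hnear; lra.
Qed.
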